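(* Let $V=\{1,\dots,n\}$ be a finite set of banks and $E$ a finite set of edges $e$ with source $s(e)\in V$ and target $t(e)\in V$, each carrying a nominal obligation $\ell_e\in[0,\infty)$; let $\iota_v\in[0,\infty)$ be the external assets of bank $v$, $\bar\ell_v=\sum_{e\in E,\,s(e)=v}\ell_e$, and $\pi_e=\ell_e/\bar\ell_{s(e)}$. Form the lattice liability network on the augmented quiver with edge set $E\cup\{e_v^{\mathrm{in}},e_v^{\mathrm{out}}:v\in V\}$ (each $e_v^{\mathrm{in}},e_v^{\mathrm{out}}$ a self-loop at $v$), where $L_v=[0,\infty]$, $\ell_{e_v^{\mathrm{in}}}=\iota_v$, $\ell_{e_v^{\mathrm{out}}}=\infty$, the distributor is $[D_v(x_v)]_e=\pi_e\min\{x_v,\bar\ell_v\}$ for $e\in E$ with $s(e)=v$, $[D_v(x_v)]_{e_v^{\mathrm{in}}}=\iota_v$, $[D_v(x_v)]_{e_v^{\mathrm{out}}}=\max\{0,x_v-\bar\ell_v\}$, the pay-out aggregator $B_v$ sums the components on edges in $E$ out of $v$ and on $e_v^{\mathrm{out}}$ (ignoring $e_v^{\mathrm{in}}$), and the pay-in aggregator is $A_v\big((p_e)_{e\in t^{-1}(v)}\big)=p_{e_v^{\mathrm{in}}}+\sum_{e\in E,\,t(e)=v}p_e$ (ignoring $e_v^{\mathrm{out}}$). Then the clearing sections of this network correspond precisely (one-to-one) to the Eisenberg–Noe clearing payment vectors, i.e. to the vectors $\mathbf{q}\in\prod_{v}[0,\bar\ell_v]$ satisfying $q_v=\min\{\bar\ell_v,\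 \iota_v+\sum_{e\in E,\,t(e)=v}\pi_e\, q_{s(e)}\}$ for all $v\in V$.
   Context: For $\mathbf{x}=(x_v)\in\prod_v[0,\infty]$, the edge payment on an edge $e$ (of the augmented quiver) is $p_e=[D_{s(e)}(x_{s(e)})]_e$, and $\mathbf{x}$ is a clearing section if $x_v=A_v\big((p_e)_{e:\,t(e)=v}\big)$ for every $v$, where the edges into $v$ include the self-loops $e_v^{\mathrm{in}},e_v^{\mathrm{out}}$. The quantities $\pi_e$ are used only for edges whose source has $\bar\ell_{s(e)}>0$. *)

(* values of banks live in [0, +oo] inside \bar R. *)
From HB Require Import structures.
From mathcomp Require Import all_boot all_order all_algebra.
From mathcomp Require Import all_classical all_reals.
From mathcomp Require Import ereal.
Set Implicit Arguments. Unset Strict Implicit. Unset Printing Implicit Defensive.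
Import Order.TTheory GRing.Theory Num.Theory.
Local Open Scope ring_scope.
Local Open Scope ereal_scope.

Section Network.
Variables (R : realType) (n : nat) (E : finType).
Variables (src tgt : E -> 'I_n) (ell : E -> R) (iota : 'I_n -> R).

Definition lbar (v : 'I_n) : R := (\sum_(e : E | src e == v) ell e)%R.

Definition relliab (e : E) : R := (ell e / lbar (src e))%R.

Inductive aug_edge := AE of E | Ein of 'I_n | Eout of 'I_n.

Definition asrc (a : aug_edge) : 'I_n :=
  match a with AE e => src e | Ein v => v | Eout v => v end.
Definition atgt (a : aug_edge) : 'I_n :=
  match a with AE e => tgt e | Ein v => v | Eout v => v end.

Definition aug_ell (a : aug_edge) : \bar R :=
  match a with AE e => (ell e)%:E | Ein v => (iota v)%:E | Eout _ => +oo end.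

(* distributor D_v : [0,oo] -> prod_{e : s(e)=v} L_e, as a function of the edge
   (only meaningful on edges with asrc a = v) *)
Definition distr (v : 'I_n) (x : \bar R) (a : aug_edge) : \bar R :=
  match a with
  | AE e => (relliab e)%:E * Order.min x (lbar v)%:E
  | Ein _ => (iota v)%:E
  | Eout _ => Order.max 0 (x - (lbar v)%:E)
  end.

Definition payout (v : 'I_n) (d : aug_edge -> \bar R) : \bar R :=
  d (Eout v) + \sum_(e : E | src e == v) d (AE e).

Definition payin (v : 'I_n) (p : aug_edge -> \bar R) : \bar R :=
  p (Ein v) + \sum_(e : E | tgt e == v) p (AE e).

Definition edge_payment (x : 'I_n -> \bar R) (a : aug_edge) : \bar R :=
  distr (asrc a) (x (asrc a)) a.

Definition clearing_section (x : 'I_n -> \bar R) : Prop :=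
  forall v, 0 <= x v /\ x v = payin v (edge_payment x).

Definition EN_clearing (q : 'I_n -> R) : Prop :=
  forall v, (0 <= q v <= lbar v)%R /\
    q v = Order.min (lbar v)
            (iota v + \sum_(e : E | tgt e == v) relliab e * q (src e))%R.

End Network.

From HB Require Import structures.
From mathcomp Require Import all_boot all_order all_algebra.
From mathcomp Require Import all_classical all_reals.
From mathcomp Require Import ereal.
Import Order.TTheory GRing.Theory Num.Theory.
Local Open Scope ring_scope.

(* Every edge payment out of v depends on x_v only through the truncation
   q_v = min(x_v, \bar ell_v): on E-edges this is explicit, e_v^in pays the
   constant iota_v, and the excess on e_v^out is ignored by the pay-in
   aggregator.  Hence A_v(p) = iota_v + sum_{t(e)=v} pi_e q_{s(e)}, and the
   clearing condition x_v = A_v(p) becomes, after truncation, exactly the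
   Eisenberg-Noe equation.  Conversely a clearing vector q determines x as its
   pay-in, which is the only possible clearing section over q. *)

Section EisenbergNoe.
Context {R : realType} {n : nat} {E : finType}.
Variables (src tgt : E -> 'I_n) (ell : E -> R) (iota : 'I_n -> R).
Hypotheses (ell_ge0 : forall e, 0 <= ell e) (iota_ge0 : forall v, 0 <= iota v).

Local Notation lbar := (lbar src ell).
Local Notation relliab := (relliab src ell).
Local Notation clearing_section := (clearing_section src tgt ell iota).
Local Notation EN_clearing := (EN_clearing src tgt ell iota).

Definition en_inflow (q : 'I_n -> R) (v : 'I_n) : R :=
  iota v + \sum_(e : E | tgt e == v) relliab e * q (src e).

Definition truncates (x : 'I_n -> \bar R) (q : 'I_n -> R) : Prop :=
  forall v, ((q v)%:E = Order.min (x v) (lbar v)%:E)%E.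

Lemma lbar_ge0 v : 0 <= lbar v.
Proof. by apply: sumr_ge0 => e _; exact: ell_ge0. Qed.

Lemma relliab_ge0 e : 0 <= relliab e.
Proof. by rewrite divr_ge0 ?lbar_ge0. Qed.

Lemma en_inflow_ge0 q : (forall v, 0 <= q v) -> forall v, 0 <= en_inflow q v.
Proof.
move=> q_ge0 v; rewrite addr_ge0 //.
by apply: sumr_ge0 => e _; rewrite mulr_ge0 ?relliab_ge0.
Qed.

Lemma payin_edge_payment {x q} : truncates x q ->
  forall v, payin tgt v (edge_payment src ell iota x) = (en_inflow q v)%:E.
Proof.
move=> xq v; rewrite /payin /edge_payment /= EFinD -sumEFin; congr (_ + _)%E.
by apply: eq_bigr => e _ /=; rewrite -xq.
Qed.

Lemma truncation_fin_num (x : \bar R) v :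
  (0 <= x)%E -> Order.min x (lbar v)%:E \is a fin_num.
Proof.
move=> x_ge0; rewrite ge0_fin_numE ?gt_min ?ltry ?orbT //.
by rewrite le_min x_ge0 lee_fin lbar_ge0.
Qed.

Lemma clearing_section_truncation {x} : clearing_section x ->
  exists q, EN_clearing q /\ truncates x q.
Proof.
move=> clx; pose q v := fine (Order.min (x v) (lbar v)%:E).
have xq : truncates x q by move=> v; rewrite fineK ?truncation_fin_num ?(proj1 (clx v)).
exists q; split=> // v; split.
  by rewrite -!lee_fin xq le_min (proj1 (clx v)) !lee_fin lbar_ge0 ge_min lexx orbT.
apply: EFin_inj; rewrite xq EFin_min minC.
by rewrite {1}(proj2 (clx v)) (payin_edge_payment xq).
Qed.

Lemma EN_clearing_truncates_inflow {q} : EN_clearing q ->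
  truncates (fun v => (en_inflow q v)%:E) q.
Proof. by move=> ENq v; rewrite -EFin_min minC -(proj2 (ENq v)). Qed.

Lemma EN_clearing_inflow_section {q} : EN_clearing q ->
  clearing_section (fun v => (en_inflow q v)%:E).
Proof.
move=> ENq v; split.
  by rewrite lee_fin en_inflow_ge0 // => w; case/andP: (proj1 (ENq w)).
by rewrite (payin_edge_payment (EN_clearing_truncates_inflow ENq)).
Qed.

Lemma clearing_section_over_eq_inflow {x q} : clearing_section x -> truncates x q ->
  x = fun v => (en_inflow q v)%:E.
Proof.
by move=> clx xq; apply: funext => v; rewrite (proj2 (clx v)) (payin_edge_payment xq).
Qed.

End EisenbergNoe.

Theorem corollary2 (R : realType) (n : nat) (E : finType)
    (src tgt : E -> 'I_n) (ell : E -> R) (iota : 'I_n -> R)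
    (hell : forall e, 0 <= ell e) (hiota : forall v, 0 <= iota v) :
  (forall x : 'I_n -> \bar R, clearing_section src tgt ell iota x ->
     exists q : 'I_n -> R, EN_clearing src tgt ell iota q /\
       forall v, ((q v)%:E = Order.min (x v) (lbar src ell v)%:E)%E) /\
  (forall q : 'I_n -> R, EN_clearing src tgt ell iota q ->
     exists! x : 'I_n -> \bar R, clearing_section src tgt ell iota x /\
       forall v, ((q v)%:E = Order.min (x v) (lbar src ell v)%:E)%E).
Proof.
split=> [x clx | q ENq].
- exact: clearing_section_truncation.
- exists (fun v => (en_inflow src tgt ell iota q v)%:E); split.
    split; [exact: EN_clearing_inflow_section | exact: EN_clearing_truncates_inflow].
  by move=> x [clx xq]; apply/esym; exact: clearing_section_over_eq_inflow clx xq.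
Qed.
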